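(* For arbitrary real $b_1,\dots,b_s,c_1,\dots,c_s$, the polynomials $v_{i_1,\dots,i_k}=v_{i_1,\dots,i_k}(b_1,c_1,\dots,b_s,c_s)$ satisfy, for all multi-indices $(i_1,\dots,i_n)$ and $(i_{n+1},\dots,i_{n+m})$ of positive integers, $$v_{i_1,\dots,i_n}\,v_{i_{n+1},\dots,i_{n+m}}=\sum_{\sigma\in\mathrm{Sh}(n,m)}v_{i_{\sigma(1)},\dots,i_{\sigma(n+m)}}.$$ The same identities hold for the coefficients $\frac1{(i_1+\cdots+i_k)\cdots(i_1+i_2)i_1}$.
   Context: $v_{i_1,\dots,i_k}=\sum_{1\le j_1\le\cdots\le j_k\le s}\frac{b_{j_1}\cdots b_{j_k}}{\sigma(j_1,\dots,j_k)}c_{j_1}^{i_1-1}\cdots c_{j_k}^{i_k-1}$, where $\sigma(j_1,\dots,j_k)=1$ if $j_1<\cdots<j_k$ and $\sigma(j_1,\dots,j_k)=\ell!\,\sigma(j_{\ell+1},\dots,j_k)$ if $j_1=\cdots=j_\ell<j_{\ell+1}\le\cdots\le j_k$. $\mathrm{Sh}(n,m)$ is the set of the $(n+m)!/(n!m!)$ permutations $\sigma$ of $(1,\dots,n+m)$ obtained by interleaving $(1,\dots,n)$ and $(n+1,\dots,n+m)$ while preserving their respective orders. *)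

From HB Require Import structures.
From mathcomp Require Import all_boot all_order all_algebra all_fingroup.
Set Implicit Arguments. Unset Strict Implicit. Unset Printing Implicit Defensive.
Import Order.TTheory GRing.Theory Num.Theory.
Local Open Scope ring_scope.

(* sigma(j_1,...,j_k) for a nondecreasing sequence j: the product of l! over
   the maximal blocks j_a = ... = j_{a+l-1} of equal entries, i.e. the
   product over the distinct values x of (multiplicity of x)!. *)
Definition sigw (s : nat) (t : seq 'I_s) : nat :=
  (\prod_(x <- undup t) (count_mem x t)`!)%N.

(* v_{i_1,...,i_k}(b_1,c_1,...,b_s,c_s), with I = [:: i_1; ...; i_k];
   the sum ranges over nondecreasing k-tuples (j_1 <= ... <= j_k) of 'I_s
   (indices shifted to start at 0). *)
Definition vpoly (R : fieldType) (s : nat) (b c : 'I_s -> R) (I : seq nat) : R :=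
  \sum_(t : (size I).-tuple 'I_s | sorted (fun x y : 'I_s => leq x y) t)
    ((\prod_(l < size I) b (tnth t l)) / (sigw t)%:R
      * \prod_(l < size I) c (tnth t l) ^+ (nth 0%N I l).-1).

Definition wcoef (R : fieldType) (I : seq nat) : R :=
  1 / \prod_(p < size I) (\sum_(q < size I | (q <= p)%N) nth 0%N I q)%:R.

(* Sh(n,m): permutations sigma of {0,...,n+m-1} such that the sequence
   (sigma(0),...,sigma(n+m-1)) is an interleaving of (0,...,n-1) and
   (n,...,n+m-1) preserving their respective orders, i.e. any two values
   a < b in the same block appear in that order (sigma^-1 a < sigma^-1 b). *)
Definition shuffleb (n m : nat) (p : {perm 'I_(n + m)}) : bool :=
  [forall a : 'I_(n + m), forall b : 'I_(n + m),
     ((a < b)%N && ((b < n)%N || (n <= a)%N)) ==> ((p^-1)%g a < (p^-1)%g b)%N].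

Definition shuffle_word (I J : seq nat) (p : {perm 'I_(size I + size J)}) : seq nat :=
  [seq nth 0%N (I ++ J) (p k) | k <- enum 'I_(size I + size J)].

(* Both identities say that a function f on words of positive integers is a
   character of the shuffle product: f u * f v is the sum of f w over the
   shuffles w of u and v.  The one-line notation of a permutation of Sh(n,m) is
   exactly a shuffle of (0,...,n-1) and (n,...,n+m-1), so the sums over Sh(n,m)
   are sums over the shuffles of I and J.

   Reversing the word turns 1/((i_1+...+i_k)...(i_1+i_2)i_1) into c with
   c(a::u) = c(u)/(a + sum u); splitting the shuffles of a::u and b::v by their
   first letter, the identity for c follows by induction from
   1/A + 1/B = (A+B)/(AB).

   Grouping a nondecreasing tuple (j_1,...,j_k) into its blocks of equal
   indices, sigma being the product of the block factorials, shows that v is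
   the deconcatenation product over j of the exponential characters
   E_j(w) = prod_(i in w) b_j c_j^(i-1) / |w|!.  Each E_j is a character since
   there are binomial(|u|+|v|,|u|) shuffles of u and v, and a deconcatenation
   product of characters is a character. *)

From HB Require Import structures.
From mathcomp Require Import all_boot all_order all_algebra all_fingroup.
From mathcomp Require Import ring.
Import Order.TTheory GRing.Theory Num.Theory.

Set Implicit Arguments.
Unset Strict Implicit.
Unset Printing Implicit Defensive.

(* One word per interleaving: a word occurs several times when u and v share
   letters, as in the sum over Sh(n,m). *)
Fixpoint shuffle (T : Type) (u v : seq T) : seq (seq T) :=
  match u with
  | [::] => [:: v]
  | a :: u' =>
    let fix shuffle_a v :=
      if v is b :: v' then map (cons a) (shuffle u' v) ++ map (cons b) (shuffle_a v')
      else [:: u] in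
    shuffle_a v
  end.

Section Shuffle.
Variable T : Type.
Implicit Types (a b : T) (u v : seq T).

Lemma shuffle0s v : shuffle [::] v = [:: v]. Proof. by []. Qed.

Lemma shuffles0 u : shuffle u [::] = [:: u]. Proof. by case: u. Qed.

Lemma shuffle_cons a b u v : shuffle (a :: u) (b :: v) =
  map (cons a) (shuffle u (b :: v)) ++ map (cons b) (shuffle (a :: u) v).
Proof. by []. Qed.

Lemma size_shuffle u v : size (shuffle u v) = 'C(size u + size v, size u).
Proof.
elim: u v => [|a u IHu] v; first by rewrite bin0.
elim: v => [|b v IHv]; first by rewrite shuffles0 addn0 binn.
by rewrite shuffle_cons size_cat !size_map IHu IHv /= !addSn !addnS binS addnC.
Qed.

End Shuffle.

Arguments shuffle : simpl never.

Lemma map_shuffle (T T' : Type) (f : T -> T') (u v : seq T) :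
  shuffle (map f u) (map f v) = map (map f) (shuffle u v).
Proof.
elim: u v => [|a u IHu] v //; elim: v => [|b v IHv] //.
rewrite [map f _]/= [map f (b :: v)]/= shuffle_cons -/(map f (b :: v)) IHu.
by rewrite -/(map f (a :: u)) IHv map_cat -!map_comp.
Qed.

Section ShuffleEq.
Variable T : eqType.
Implicit Types (a b : T) (u v w : seq T).

Lemma perm_swap_heads a b u v : perm_eq (a :: u ++ b :: v) (b :: a :: u ++ v).
Proof. by rewrite (perm_catCA (a :: u) [:: b] v). Qed.

Lemma perm_shuffle u v w : w \in shuffle u v -> perm_eq w (u ++ v).
Proof.
elim: u v w => [|a u IHu] v w; first by rewrite inE => /eqP ->.
elim: v w => [|b v IHv] w; first by rewrite shuffles0 inE cats0 => /eqP ->.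
rewrite shuffle_cons mem_cat => /orP[] /mapP[w' w'_in ->].
  by rewrite /= perm_cons IHu.
by rewrite perm_sym (perm_trans (perm_swap_heads a b u v)) // perm_cons perm_sym IHv.
Qed.

Lemma uniq_shuffle u v : uniq (u ++ v) -> uniq (shuffle u v).
Proof.
elim: u v => [|a u IHu] v //; elim: v => [|b v IHv]; first by rewrite shuffles0.
move=> Uuv; have /andP[bNauv Uauv] : uniq (b :: a :: u ++ v).
  by rewrite -(perm_uniq (perm_swap_heads a b u v)).
rewrite shuffle_cons cat_uniq !map_inj_uniq; try by move=> ? ? [].
rewrite IHu ?IHv //=; last by case/andP: Uuv.
rewrite andbT; apply/hasPn => _ /mapP[y _ ->]; apply/negP => /mapP[z _ [eab _]].
by move: bNauv; rewrite eab inE eqxx.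
Qed.

Lemma perm_subseq_eq v w : perm_eq w v -> subseq v w -> w = v.
Proof.
move=> pwv svw; apply/esym/eqP; rewrite -(geq_leqif (size_subseq_leqif svw)).
by rewrite (perm_size pwv).
Qed.

Lemma mem_shuffle u v w : uniq (u ++ v) ->
  (w \in shuffle u v) = [&& perm_eq w (u ++ v), subseq u w & subseq v w].
Proof.
have one_side (x y : seq T) : (y \in [:: x]) = perm_eq y x && subseq x y.
  rewrite inE; apply/eqP/andP => [->|[]]; last exact: perm_subseq_eq.
  by rewrite perm_refl subseq_refl.
elim: u v w => [|a u IHu] v w; first by rewrite shuffle0s one_side sub0seq.
elim: v w => [|b v IHv] w; first by rewrite shuffles0 one_side sub0seq andbT cats0.
move=> Uuv; have /andP[bNauv Uauv] : uniq (b :: a :: u ++ v).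
  by rewrite -(perm_uniq (perm_swap_heads a b u v)).
have Uubv : uniq (u ++ b :: v) by case/andP: Uuv.
have neq_ab : a != b by apply: contraNneq bNauv => <-; rewrite mem_head.
rewrite shuffle_cons mem_cat; apply/orP/and3P.
  case=> /mapP[w' + ->].
    rewrite IHu // => /and3P[pw' su' sv'].
    split; rewrite /= ?perm_cons ?eqxx //.
    exact: subseq_trans sv' (subseq_cons _ _).
  rewrite IHv // => /and3P[pw' su' sv']; split; rewrite /= ?eqxx //.
    by rewrite perm_sym (perm_trans (perm_swap_heads a b u v)) // perm_cons perm_sym.
  exact: subseq_trans su' (subseq_cons _ _).
case: w => [|z w] [pw su sv]; first by move: (perm_size pw); rewrite size_cat.
have Uzw : uniq (z :: w) by rewrite (perm_uniq pw).
have [eq_za|neq_za] := eqVneq z a.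
  subst z; left; apply/map_f; rewrite IHu //.
  by move: pw su sv; rewrite /= perm_cons eqxx eq_sym (negbTE neq_ab) => -> -> ->.
have [eq_zb|neq_zb] := eqVneq z b.
  subst z; right; apply/map_f; rewrite IHv //.
  move: pw su sv; rewrite /= eqxx (negbTE neq_ab) => pw -> ->; rewrite andbT.
  by rewrite -(perm_cons b) (perm_trans pw) ?perm_swap_heads.
exfalso; have : z \in a :: u ++ b :: v by rewrite -(perm_mem pw) mem_head.
move: su sv Uzw; rewrite /= eq_sym (negbTE neq_za) eq_sym (negbTE neq_zb).
move=> su sv /andP[zNw _]; rewrite !inE (negbTE neq_za) mem_cat inE (negbTE neq_zb) /=.
by case/orP=> z_in; case/negP: zNw; [apply: (mem_subseq su) | apply: (mem_subseq sv)];
  rewrite inE z_in orbT.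
Qed.

Lemma perm_shuffle_rev u v : uniq (u ++ v) ->
  perm_eq (shuffle u v) (map rev (shuffle (rev u) (rev v))).
Proof.
move=> Uuv; have Urev : uniq (rev u ++ rev v) by rewrite -rev_cat rev_uniq uniq_catC.
apply: uniq_perm; first exact: uniq_shuffle.
  by rewrite map_inj_uniq ?uniq_shuffle //; exact: (can_inj revK).
move=> w; rewrite -{2}(revK w) (mem_map (can_inj revK)) !mem_shuffle // !subseq_rev.
congr (_ && _).
by rewrite -rev_cat (perm_rev w) perm_sym [RHS]perm_sym (perm_rev (v ++ u)) perm_catC.
Qed.

End ShuffleEq.

Lemma sumn_shuffle (u v w : seq nat) : w \in shuffle u v -> sumn w = sumn u + sumn v.
Proof. by move/perm_shuffle/perm_sumn ->; rewrite sumn_cat. Qed.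

Section IndexOrder.
Variable T : eqType.
Implicit Types (s w : seq T) (x y : T).

Lemma subseq_index_lt s w x y : uniq w -> subseq s w ->
  x \in s -> y \in s -> index x s < index y s -> index x w < index y w.
Proof.
elim: w s => [|z w IH] [|t s] //=; case/andP=> zNw Uw.
have [->|neq_tz] := eqVneq t z.
  move=> sw; rewrite !inE.
  have [->|neq_xz] := eqVneq x z; have [->|neq_yz] := eqVneq y z => //=.
  by move=> xs ys; rewrite !ltnS; apply: IH.
move=> sw xs ys lt_xy.
have neq_xz : x != z by apply: contraNneq zNw => <-; apply: (mem_subseq sw).
have neq_yz : y != z by apply: contraNneq zNw => <-; apply: (mem_subseq sw).
rewrite eq_sym (negbTE neq_xz) eq_sym (negbTE neq_yz) ltnS.
exact: (IH (t :: s)).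
Qed.

Lemma index_lt_subseq s w : uniq s -> uniq w -> {subset s <= w} ->
  (forall x y, x \in s -> y \in s -> index x s < index y s -> index x w < index y w) ->
  subseq s w.
Proof.
elim: w s => [|z w IH] s.
  by case: s => // t s _ _ /(_ t (mem_head _ _)).
move=> Us /andP[zNw Uw] sub_sw mono.
have index_z x : x != z -> index x (z :: w) = (index x w).+1.
  by move=> neq_xz; rewrite /= eq_sym (negbTE neq_xz).
have [zs|zNs] := boolP (z \in s); last first.
  have sub_s : {subset s <= w}.
    move=> x xs; have := sub_sw x xs; rewrite inE => /predU1P[exz|//].
    by case/negP: zNs; rewrite -exz.
  apply: subseq_trans (subseq_cons w z); apply: IH => // x y xs ys lt_xy.
  have neq_xz : x != z by apply: contraNneq zNs => <-.
  have neq_yz : y != z by apply: contraNneq zNs => <-.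
  by have := mono x y xs ys lt_xy; rewrite !index_z.
case: s Us sub_sw mono zs => [//|t s] /= /andP[tNs Us] sub_sw mono zs.
have eq_tz : t = z.
  apply/eqP; apply: contraT => neq_tz.
  have : index t (t :: s) < index z (t :: s) by rewrite /= eqxx (negbTE neq_tz).
  by move/(mono t z (mem_head _ _) zs); rewrite /= eqxx.
subst t; rewrite eqxx.
have in_zs v : v \in s -> v \in z :: s by move=> vs; rewrite inE vs orbT.
apply: IH => // [x xs|x y xs ys lt_xy].
  have := sub_sw x (in_zs x xs); rewrite inE => /predU1P[exz|//].
  by case/negP: tNs; rewrite -exz.
have neq_xz : x != z by apply: contraNneq tNs => <-.
have neq_yz : y != z by apply: contraNneq tNs => <-.
have := mono x y (in_zs x xs) (in_zs y ys).
by rewrite /= eq_sym (negbTE neq_xz) eq_sym (negbTE neq_yz) ltnS => /(_ lt_xy).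
Qed.

End IndexOrder.

Lemma index_in_iota k l x : k <= x < k + l -> index x (iota k l) = x - k.
Proof.
case/andP=> kx xkl; have lt_xk_l : x - k < l by rewrite ltn_subLR.
by rewrite -{1}(subnKC kx) -(nth_iota 0 k lt_xk_l) index_uniq ?iota_uniq ?size_iota.
Qed.

Section PermVals.
Variable N : nat.
Implicit Type p : {perm 'I_N}.

Definition perm_vals p : seq nat := [seq val (p k) | k <- enum 'I_N].

Lemma index_perm_vals p (x : 'I_N) : index (val x) (perm_vals p) = val ((p^-1)%g x).
Proof.
have inj_p : injective (fun k => val (p k)) by move=> ? ? /val_inj/perm_inj.
by rewrite /perm_vals -{1}(permKV p x) (index_map inj_p) index_enum_ord.
Qed.

Lemma perm_vals_inj : injective perm_vals.
Proof.
move=> p q eq_pq; apply: (@invg_inj _ p q); apply/permP => k; apply/val_inj.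
by rewrite -!index_perm_vals eq_pq.
Qed.

Lemma uniq_perm_vals p : uniq (perm_vals p).
Proof. by rewrite map_inj_uniq ?enum_uniq // => ? ? /val_inj/perm_inj. Qed.

Lemma perm_vals_iota p : perm_eq (perm_vals p) (iota 0 N).
Proof.
apply: uniq_perm; rewrite ?uniq_perm_vals ?iota_uniq // => x.
rewrite mem_iota add0n; apply/mapP/idP => [[k _ ->]|xN]; first exact: ltn_ord.
by exists ((p^-1)%g (Ordinal xN)); rewrite ?mem_enum ?permKV.
Qed.

Lemma perm_vals_surj w : perm_eq w (iota 0 N) -> exists p, perm_vals p = w.
Proof.
move=> pw; have size_w : size w = N by rewrite (perm_size pw) size_iota.
have Uw : uniq w by rewrite (perm_uniq pw) iota_uniq.
have w_lt k : nth 0 w (val (k : 'I_N)) < N.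
  have : nth 0 w k \in iota 0 N by rewrite -(perm_mem pw) mem_nth ?size_w.
  by rewrite mem_iota.
have inj_w : injective (fun k => Ordinal (w_lt k)).
  by move=> k k' [] /eqP; rewrite nth_uniq ?size_w // => /eqP /val_inj.
exists (perm inj_w); rewrite /perm_vals (eq_map (g := nth 0 w \o val)) => [|k].
  by rewrite map_comp val_enum_ord -size_w -/(mkseq _ _) mkseq_nth.
by rewrite permE.
Qed.

Lemma subseq_iota_perm_valsP p k l : k + l <= N ->
  reflect (forall x y : 'I_N, k <= x -> x < y -> y < k + l -> (p^-1)%g x < (p^-1)%g y)
          (subseq (iota k l) (perm_vals p)).
Proof.
move=> klN; apply: (iffP idP) => [sub x y kx xy ykl | mono].
  rewrite -!index_perm_vals; apply: (subseq_index_lt (uniq_perm_vals p) sub).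
  - by rewrite mem_iota kx (ltn_trans xy).
  - by rewrite mem_iota ykl (leq_trans kx (ltnW xy)).
  rewrite !index_in_iota ?kx ?ykl ?(ltn_trans xy) ?(leq_trans kx (ltnW xy)) //.
  by rewrite ltn_sub2r // (leq_ltn_trans kx xy).
apply: index_lt_subseq; rewrite ?iota_uniq ?uniq_perm_vals //.
  move=> x; rewrite (perm_mem (perm_vals_iota p)) !mem_iota add0n.
  by case/andP=> _ /leq_trans; apply.
move=> x y; rewrite !mem_iota => /andP[kx xkl] /andP[ky ykl].
rewrite !index_in_iota ?kx ?ky ?xkl ?ykl // ltn_sub2rE // => xy.
have xN : x < N by apply: leq_trans klN.
have yN : y < N by apply: leq_trans klN.
by rewrite (index_perm_vals p (Ordinal xN)) (index_perm_vals p (Ordinal yN)) mono.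
Qed.

End PermVals.

Lemma shufflebE n m (p : {perm 'I_(n + m)}) :
  shuffleb p = subseq (iota 0 n) (perm_vals p) && subseq (iota n m) (perm_vals p).
Proof.
have n_le_nm : 0 + n <= n + m by rewrite leq_addr.
apply/forallP/andP => [sh | [/subseq_iota_perm_valsP lo /subseq_iota_perm_valsP hi] x].
  have sh_xy (x y : 'I_(n + m)) := implyP (forallP (sh x) y).
  split; apply/subseq_iota_perm_valsP => // x y kx xy ykl; apply: sh_xy.
    by move: ykl; rewrite add0n xy => ->.
  by rewrite xy kx orbT.
apply/forallP => y; apply/implyP => /andP[xy /orP[yn | nx]].
  exact: lo.
exact: hi.
Qed.

Local Open Scope ring_scope.

Lemma sum_shuffleb (R : nmodType) n m (F : seq nat -> R) :
  \sum_(p : {perm 'I_(n + m)} | shuffleb p) F (perm_vals p) =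
  \sum_(w <- shuffle (iota 0%N n) (iota n m)) F w.
Proof.
have iota_nm : iota 0%N n ++ iota n m = iota 0%N (n + m) by rewrite iotaD.
have Unm : uniq (iota 0%N n ++ iota n m) by rewrite iota_nm iota_uniq.
have shE (p : {perm 'I_(n + m)}) : shuffleb p = (perm_vals p \in shuffle (iota 0%N n) (iota n m)).
  by rewrite shufflebE mem_shuffle // iota_nm perm_vals_iota.
rewrite (eq_bigl _ _ shE) -(big_map (@perm_vals _) (fun w => w \in shuffle _ _) F) -big_filter.
apply: perm_big; apply: uniq_perm.
- by rewrite filter_uniq // map_inj_uniq ?index_enum_uniq //; exact: (@perm_vals_inj _).
- exact: uniq_shuffle.
move=> w; rewrite mem_filter andb_idr //= => w_sh.
have /perm_vals_surj[p <-] : perm_eq w (iota 0%N (n + m)).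
  by move: w_sh; rewrite mem_shuffle // iota_nm => /andP[].
exact/map_f/mem_index_enum.
Qed.

Lemma map_nth_iota_cat (I J : seq nat) :
  map (nth 0%N (I ++ J)) (iota 0%N (size I)) = I /\
  map (nth 0%N (I ++ J)) (iota (size I) (size J)) = J.
Proof.
have := mkseq_nth 0%N (I ++ J); rewrite /mkseq size_cat iotaD map_cat add0n.
by move/eqP; rewrite eqseq_cat ?size_map ?size_iota // => /andP[/eqP -> /eqP ->].
Qed.

Lemma sum_shuffle_word (R : nmodType) (F : seq nat -> R) (I J : seq nat) :
  \sum_(p : {perm 'I_(size I + size J)} | shuffleb p) F (shuffle_word p) =
  \sum_(w <- shuffle I J) F w.
Proof.
have [mapI mapJ] := map_nth_iota_cat I J; set g := nth 0%N (I ++ J) in mapI mapJ *.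
rewrite -[in RHS]mapI -[in RHS]mapJ map_shuffle big_map -sum_shuffleb.
by apply: eq_bigr => p _; rewrite /shuffle_word /perm_vals -map_comp.
Qed.

Lemma sum_shuffle_rev (R : nmodType) (F : seq nat -> R) (I J : seq nat) :
  \sum_(w <- shuffle I J) F w = \sum_(w <- shuffle (rev I) (rev J)) F (rev w).
Proof.
have [mapI mapJ] := map_nth_iota_cat I J; set g := nth 0%N (I ++ J) in mapI mapJ.
have Uiota : uniq (iota 0%N (size I) ++ iota (size I) (size J)) by rewrite -iotaD iota_uniq.
rewrite -[in LHS]mapI -[in LHS]mapJ -[in RHS]mapI -[in RHS]mapJ -!map_rev.
rewrite !map_shuffle !big_map (perm_big _ (perm_shuffle_rev Uiota)) big_map.
by apply: eq_bigr => w _; rewrite map_rev.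
Qed.

Section Coefficients.
Variable R : numFieldType.
Implicit Types (u v : seq nat).

Lemma wcoef_rcons u a : wcoef R (rcons u a) = wcoef R u / (sumn u + a)%:R.
Proof.
rewrite /wcoef size_rcons big_ord_recr /= !div1r -invfM; congr ((_ * _%:R)^-1); last first.
  rewrite (eq_bigl xpredT) => [|q]; last by rewrite -ltnS ltn_ord.
  rewrite big_ord_recr /= nth_rcons ltnn eqxx; congr (_ + _)%N.
  by rewrite sumnE (big_nth 0%N) big_mkord; apply: eq_bigr => q _; rewrite nth_rcons ltn_ord.
apply: eq_bigr => i _; congr _%:R.
rewrite big_mkcond big_ord_recr /= leqNgt ltn_ord addn0 -big_mkcond /=.
by apply: eq_bigr => q _; rewrite nth_rcons ltn_ord.
Qed.

Fixpoint suffix_coef (u : seq nat) : R :=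
  if u is a :: u' then suffix_coef u' / (a + sumn u')%:R else 1.

Lemma wcoef_rev u : wcoef R (rev u) = suffix_coef u.
Proof.
elim: u => [|a u IH]; first by rewrite /wcoef big_ord0 divr1.
by rewrite rev_cons wcoef_rcons IH sumn_rev addnC.
Qed.

Lemma suffix_coef_shuffle u v :
  all (fun i => 0 < i)%N u -> all (fun i => 0 < i)%N v ->
  suffix_coef u * suffix_coef v = \sum_(w <- shuffle u v) suffix_coef w.
Proof.
elim: u v => [|a u IHu] v; first by rewrite shuffle0s big_seq1 mul1r.
elim: v => [|b v IHv]; first by rewrite shuffles0 big_seq1 mulr1.
move=> /[dup] au_pos /andP[a_gt0 u_pos] /[dup] bv_pos /andP[b_gt0 v_pos].
have sum_cons x (u' v' : seq nat) : \sum_(w <- shuffle u' v') suffix_coef (x :: w)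
    = (\sum_(w <- shuffle u' v') suffix_coef w) / (x + sumn u' + sumn v')%:R.
  by rewrite mulr_suml; apply: eq_big_seq => w /sumn_shuffle /= ->; rewrite addnA.
rewrite shuffle_cons big_cat !big_map !sum_cons -IHu // -IHv //= !natrD.
by field; rewrite -!natrD !pnatr_eq0 -!lt0n !addn_gt0 a_gt0 b_gt0 !orbT.
Qed.

End Coefficients.

Section Deconcatenation.
Variables (R : nmodType) (T : Type).
Implicit Types (G : seq T -> seq T -> R) (u v w : seq T).

Definition deconcat_sum G w := \sum_(j < (size w).+1) G (take j w) (drop j w).

Definition split_shuffle_sum G u v (j1 j2 : nat) :=
  \sum_(w1 <- shuffle (take j1 u) (take j2 v))
    \sum_(w2 <- shuffle (drop j1 u) (drop j2 v)) G w1 w2.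

Lemma deconcat_sum_cons G a w :
  deconcat_sum G (a :: w) = G [::] (a :: w) + deconcat_sum (fun w1 => G (a :: w1)) w.
Proof. by rewrite /deconcat_sum big_ord_recl. Qed.

Lemma split_shuffle_sum_cons G a b u v j1 j2 :
  split_shuffle_sum G (a :: u) (b :: v) j1.+1 j2.+1 =
  split_shuffle_sum (fun w1 => G (a :: w1)) u (b :: v) j1 j2.+1 +
  split_shuffle_sum (fun w1 => G (b :: w1)) (a :: u) v j1.+1 j2.
Proof. by rewrite /split_shuffle_sum shuffle_cons big_cat !big_map. Qed.

Lemma sum_ord_recl_inner n m (F : nat -> nat -> R) :
  \sum_(i < n) \sum_(j < m.+1) F i j =
  \sum_(i < n) F i 0 + \sum_(i < n) \sum_(j < m) F i j.+1.
Proof. by rewrite -big_split; apply: eq_bigr => i _; rewrite big_ord_recl. Qed.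

Lemma sum_ord_recl2 n m (F : nat -> nat -> R) :
  \sum_(i < n.+1) \sum_(j < m.+1) F i j =
  F 0 0 + \sum_(j < m) F 0 j.+1 + (\sum_(i < n) F i.+1 0 + \sum_(i < n) \sum_(j < m) F i.+1 j.+1).
Proof. by rewrite big_ord_recl (sum_ord_recl_inner _ _ (fun i j => F i.+1 j)) big_ord_recl. Qed.

Lemma sum_shuffle_deconcat G u v :
  \sum_(w <- shuffle u v) deconcat_sum G w =
  \sum_(j1 < (size u).+1) \sum_(j2 < (size v).+1) split_shuffle_sum G u v j1 j2.
Proof.
elim: u v G => [|a u IHu] v G.
  rewrite big_seq1 big_ord1 /split_shuffle_sum.
  by apply: eq_bigr => j _; rewrite !big_seq1.
elim: v G => [|b v IHv] G.
  rewrite shuffles0 big_seq1 /split_shuffle_sum; apply: eq_bigr => j _.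
  by rewrite /= big_ord1 /= !shuffles0 !big_seq1.
rewrite shuffle_cons big_cat !big_map /=.
under eq_bigr do rewrite deconcat_sum_cons.
under [X in _ + X]eq_bigr do rewrite deconcat_sum_cons.
rewrite !big_split IHu IHv /= addrACA.
have -> : \sum_(w <- shuffle u (b :: v)) G [::] (a :: w) +
    \sum_(w <- shuffle (a :: u) v) G [::] (b :: w) =
    split_shuffle_sum G (a :: u) (b :: v) 0 0.
  by rewrite /split_shuffle_sum /= shuffle0s big_seq1 shuffle_cons big_cat !big_map.
set F := split_shuffle_sum G (a :: u) (b :: v).
set Fa := split_shuffle_sum (fun w1 => G (a :: w1)) u (b :: v).
set Fb := split_shuffle_sum (fun w1 => G (b :: w1)) (a :: u) v.
rewrite sum_ord_recl_inner [X in _ + (_ + X)]big_ord_recl sum_ord_recl2 /= -addrA.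
congr (_ + _).
have -> : \sum_(j < (size v).+1) F 0%N j.+1 = \sum_(j < (size v).+1) Fb 0%N j.
  by apply: eq_bigr => j _; rewrite /F /Fb /split_shuffle_sum /= !shuffle0s !big_seq1.
have -> : \sum_(i < (size u).+1) F i.+1 0%N = \sum_(i < (size u).+1) Fa i 0%N.
  by apply: eq_bigr => i _; rewrite /F /Fa /split_shuffle_sum /= !shuffles0 !big_seq1.
have -> : \sum_(i < (size u).+1) \sum_(j < (size v).+1) F i.+1 j.+1 =
    \sum_(i < (size u).+1) \sum_(j < (size v).+1) Fa i j.+1 +
    \sum_(i < (size u).+1) \sum_(j < (size v).+1) Fb i.+1 j.
  rewrite -big_split; apply: eq_bigr => i _.
  by rewrite -big_split; apply: eq_bigr => j _; apply: split_shuffle_sum_cons.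
by rewrite addrACA (addrC _ (\sum_(j < _) Fb 0%N j)) -addrA.
Qed.

End Deconcatenation.

Section ShuffleCharacters.
Variables (R : comPzRingType) (T : Type).
Implicit Types (f g : seq T -> R) (u v w : seq T).

Definition shuffle_char f := forall u v, f u * f v = \sum_(w <- shuffle u v) f w.

Definition deconcat_mul f g w := deconcat_sum (fun w1 w2 => f w1 * g w2) w.

Definition empty_char w : R := if w is [::] then 1 else 0.

Lemma shuffle_char_empty : shuffle_char empty_char.
Proof.
case=> [|a u] [|b v]; rewrite ?shuffle0s ?shuffles0 ?big_seq1 ?mul1r ?mulr1 //.
by rewrite shuffle_cons big_cat !big_map /= !big1 ?mul0r ?addr0.
Qed.

Lemma shuffle_char_deconcat_mul f g :
  shuffle_char f -> shuffle_char g -> shuffle_char (deconcat_mul f g).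
Proof.
move=> f_char g_char u v; rewrite /deconcat_mul sum_shuffle_deconcat /deconcat_sum.
rewrite big_distrl; apply: eq_bigr => j1 _; rewrite big_distrr; apply: eq_bigr => j2 _.
rewrite /= mulrACA f_char g_char big_distrl; apply: eq_bigr => w1 _.
by rewrite big_distrr.
Qed.

End ShuffleCharacters.

Section ExponentialCharacter.
Variables (R : numFieldType) (T : eqType) (a : T -> R).

Definition exp_char (w : seq T) := (\prod_(x <- w) a x) / (size w)`!%:R.

Lemma shuffle_char_exp : shuffle_char exp_char.
Proof.
move=> u v; rewrite (eq_big_seq (fun => exp_char (u ++ v))); last first.
  by move=> w /perm_shuffle pw; rewrite /exp_char (perm_big _ pw) (perm_size pw).
rewrite big_const_seq count_predT size_shuffle iter_addr_0 -[RHS]mulr_natr.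
rewrite /exp_char big_cat size_cat /=.
have fact_nm : (size u + size v)`! = ('C(size u + size v, size u) * (size u)`! * (size v)`!)%N.
  by rewrite -mulnA -(bin_fact (leq_addr (size v) (size u))) addKn.
have nat_neq0 n : (0 < n)%N -> n%:R != 0 :> R by rewrite pnatr_eq0 -lt0n.
rewrite fact_nm !natrM.
by field; rewrite !nat_neq0 ?fact_gt0 ?bin_gt0 ?leq_addr.
Qed.

End ExponentialCharacter.

Section SortedWords.
Variable T : eqType.
Implicit Types (x : T) (xs t : seq T).

Definition index_le xs := fun y z : T => (index y xs <= index z xs)%N.

Fixpoint sorted_words xs (k : nat) : seq (seq T) :=
  if xs is x :: xs' then [seq nseq j x ++ t | j <- iota 0 k.+1, t <- sorted_words xs' (k - j)]
  else if k is 0 then [:: [::]] else [::].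

Lemma sorted_words_cons x xs k :
  sorted_words (x :: xs) k =
  [seq nseq j x ++ t | j <- iota 0 k.+1, t <- sorted_words xs (k - j)].
Proof. by []. Qed.

Lemma index_le_trans xs : transitive (index_le xs).
Proof. by move=> y x z; apply: leq_trans. Qed.

Lemma sorted_index_le_cons x xs t : x \notin xs -> all (mem xs) t ->
  sorted (index_le (x :: xs)) t = sorted (index_le xs) t.
Proof.
move=> xNxs t_xs; apply: (eq_in_sorted (P := mem xs)) => // y z y_xs z_xs.
have neq_xy : x != y by apply: contraNneq xNxs => ->.
have neq_xz : x != z by apply: contraNneq xNxs => ->.
by rewrite /index_le /= (negbTE neq_xy) (negbTE neq_xz) ltnS.
Qed.

Lemma sorted_index_le_nseq x xs j t :
  sorted (index_le (x :: xs)) (nseq j x ++ t) = sorted (index_le (x :: xs)) t.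
Proof.
elim: j => [//|j IH]; rewrite -IH /=.
by case: (nseq j x ++ t) => //= y s; rewrite /index_le /= eqxx.
Qed.

Lemma sorted_index_le_split x xs t :
  all (mem (x :: xs)) t -> sorted (index_le (x :: xs)) t ->
  t = nseq (count_mem x t) x ++ filter (predC1 x) t.
Proof.
elim: t => [//|y t IH] /= /andP[_ t_xs] sorted_yt.
have sorted_t := path_sorted sorted_yt.
have [->|neq_yx] := eqVneq y x; first by rewrite /= {1}(IH t_xs sorted_t).
have xNt : x \notin t.
  apply/negP => xt; have /allP/(_ x xt) := order_path_min (@index_le_trans _) sorted_yt.
  by rewrite /index_le /= eqxx eq_sym (negbTE neq_yx).
rewrite (count_memPn xNt) /=; congr (_ :: _); symmetry.
by apply/all_filterP/allP => z zt /=; apply: contraNneq xNt => <-.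
Qed.

Lemma mem_sorted_words xs k t : uniq xs ->
  (t \in sorted_words xs k) = [&& size t == k, all (mem xs) t & sorted (index_le xs) t].
Proof.
elim: xs k t => [|x xs IH] k t; first by case: t => [|y t] _; case: k => //= k; rewrite andbF.
move=> /andP[xNxs Uxs]; rewrite sorted_words_cons; apply/allpairsPdep/and3P.
  case=> j [t' []]; rewrite mem_iota add0n ltnS IH // => jk /and3P[/eqP size_t' t'_xs t'_sorted] ->.
  split; first by rewrite size_cat size_nseq size_t' subnKC.
    rewrite all_cat; apply/andP; split; first by apply/allP => y /nseqP[-> _]; apply: mem_head.
    by apply/allP => y /(allP t'_xs) /= y_xs; rewrite inE y_xs orbT.
  by rewrite sorted_index_le_nseq sorted_index_le_cons.
case=> /eqP size_t t_xs t_sorted; have def_t := sorted_index_le_split t_xs t_sorted.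
have t'_xs : all (mem xs) (filter (predC1 x) t).
  apply/allP => y; rewrite mem_filter => /andP[/= neq_yx yt].
  by have := allP t_xs y yt; rewrite /= inE (negbTE neq_yx).
exists (count_mem x t), (filter (predC1 x) t); split=> //.
  by rewrite mem_iota add0n ltnS -size_t count_size.
rewrite IH //; apply/and3P; split=> //.
  by rewrite size_filter -size_t -(count_predC (pred1 x) t) addKn.
rewrite -(sorted_index_le_cons xNxs t'_xs).
by apply: sorted_filter t_sorted; exact: index_le_trans.
Qed.

Lemma uniq_sorted_words xs k : uniq xs -> uniq (sorted_words xs k).
Proof.
elim: xs k => [|x xs IH] k; first by case: k.
move=> /andP[xNxs Uxs]; rewrite sorted_words_cons.
apply: allpairs_uniq_dep => [|j _|[j1 t1] [j2 t2]]; rewrite ?iota_uniq ?IH //.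
move=> /allpairsPdep[j1' [t1' [_ t1_in [-> ->]]]] /allpairsPdep[j2' [t2' [_ t2_in [-> ->]]]] /=.
have count_x0 j t' : t' \in sorted_words xs (k - j) -> count_mem x t' = 0%N.
  rewrite mem_sorted_words // => /and3P[_ /allP t'_xs _].
  by apply/count_memPn/negP => /t'_xs; rewrite /= (negbTE xNxs).
move=> eq_t; have eq_j : j1' = j2'.
  have := congr1 (count_mem x) eq_t; rewrite !count_cat !count_nseq.
  by rewrite (count_x0 _ _ t1_in) (count_x0 _ _ t2_in) /= eqxx !mul1n !addn0.
by subst j2'; move/eqP: eq_t; rewrite eqseq_cat ?size_nseq // eqxx /= => /eqP ->.
Qed.

End SortedWords.

Section LetterProducts.
Variables (R : numFieldType) (T : eqType) (a : T -> nat -> R).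
Implicit Types (x : T) (xs t : seq T) (w : seq nat).

Fixpoint letters_char xs : seq nat -> R :=
  if xs is x :: xs' then deconcat_mul (exp_char (a x)) (letters_char xs') else @empty_char R nat.

Lemma letters_char_cons x xs :
  letters_char (x :: xs) = deconcat_mul (exp_char (a x)) (letters_char xs).
Proof. by []. Qed.

Lemma shuffle_char_letters xs : shuffle_char (letters_char xs).
Proof.
elim: xs => [|x xs IH]; first exact: shuffle_char_empty.
exact: shuffle_char_deconcat_mul (shuffle_char_exp _) IH.
Qed.

(* The summand of [vpoly] at the nondecreasing word t, with sigma counted over
   all the letters of xs. *)
Definition word_weight xs t w : R :=
  (\prod_(p <- zip t w) a p.1 p.2) / (\prod_(y <- xs) (count_mem y t)`!)%:R.

Lemma prod_zip_nseq x j w : size w = j ->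
  \prod_(p <- zip (nseq j x) w) a p.1 p.2 = \prod_(i <- w) a x i.
Proof. by move <-; elim: w => [|i w IH]; rewrite ?big_nil //= !big_cons IH. Qed.

Lemma word_weight_cons x xs j t w : x \notin xs -> all (mem xs) t -> (j <= size w)%N ->
  word_weight (x :: xs) (nseq j x ++ t) w = exp_char (a x) (take j w) * word_weight xs t (drop j w).
Proof.
move=> xNxs t_xs jw; have xNt : x \notin t by apply/negP => /(allP t_xs); apply/negP.
rewrite /word_weight /exp_char -{1}(cat_take_drop j w) zip_cat ?size_nseq ?size_takel //.
rewrite big_cat /= (prod_zip_nseq _ (size_takel jw)) big_cons.
rewrite count_cat count_nseq /= eqxx mul1n (count_memPn xNt) addn0.
rewrite (eq_big_seq (fun y => (count_mem y t)`!)%N) => [|y y_xs]; last first.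
  have neq_xy : x != y by apply: contraNneq xNxs => ->.
  by rewrite count_cat count_nseq /= (negbTE neq_xy) mul0n add0n.
by rewrite natrM invfM mulrACA.
Qed.

Lemma sum_sorted_words_weight xs w : uniq xs ->
  \sum_(t <- sorted_words xs (size w)) word_weight xs t w = letters_char xs w.
Proof.
elim: xs w => [|x xs IH] w.
  by case: w => [|i w] _; rewrite ?big_nil // big_seq1 /word_weight !big_nil divr1.
move=> /andP[xNxs Uxs]; rewrite sorted_words_cons big_allpairs_dep.
have -> : iota 0%N (size w).+1 = index_iota 0 (size w).+1 by rewrite /index_iota subn0.
rewrite letters_char_cons /deconcat_mul /deconcat_sum big_mkord.
apply: eq_bigr => j _; rewrite -IH // size_drop big_distrr /=.
apply: eq_big_seq => t; rewrite mem_sorted_words // => /and3P[_ t_xs _].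
by rewrite word_weight_cons // -ltnS ltn_ord.
Qed.

End LetterProducts.

Lemma sum_sorted_tuples (R : nmodType) (T : finType) k (F : seq T -> R) :
  \sum_(t : k.-tuple T | sorted (index_le (enum T)) t) F t =
  \sum_(t <- sorted_words (enum T) k) F t.
Proof.
rewrite -(big_map (@tval k T) (sorted (index_le (enum T))) F) -big_filter.
apply: perm_big; apply: uniq_perm.
- by rewrite filter_uniq // map_inj_uniq ?index_enum_uniq //; exact: val_inj.
- exact/uniq_sorted_words/enum_uniq.
move=> t; rewrite mem_filter mem_sorted_words ?enum_uniq //.
have -> : all (mem (enum T)) t by apply/allP => y _; rewrite /= mem_enum.
rewrite andbC /=; congr (_ && _); apply/mapP/eqP => [[t' _ ->]|size_t].
  by rewrite size_tuple.
by exists (Tuple (introT eqP size_t)) => //; exact: mem_index_enum.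
Qed.

Lemma prod_tnth_zip (R : comPzSemiRingType) (T : Type) (F : T -> nat -> R) k
    (t : k.-tuple T) (w : seq nat) : size w = k ->
  \prod_(l < k) F (tnth t l) (nth 0%N w l) = \prod_(p <- zip t w) F p.1 p.2.
Proof.
elim: k t w => [|k IH] t w; first by rewrite tuple0 big_ord0; case: w => // _; rewrite big_nil.
case/tupleP: t => y t; case: w => [//|i w] /= [size_w].
rewrite big_ord_recl big_cons /= -(IH t w size_w).
by congr (_ * _); apply: eq_bigr => l _; rewrite tnthS.
Qed.

Lemma sigw_enum s (t : seq 'I_s) : sigw t = (\prod_(y <- enum 'I_s) (count_mem y t)`!)%N.
Proof.
rewrite /sigw [RHS](bigID (mem t)) /= [X in (_ * X)%N]big1 ?muln1 => [|y /count_memPn ->//].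
rewrite -[RHS]big_filter; apply/perm_big/uniq_perm => [||y].
- exact: undup_uniq.
- exact/filter_uniq/enum_uniq.
by rewrite mem_undup mem_filter mem_enum andbT.
Qed.

Lemma index_le_enum_ord s : index_le (enum 'I_s) =2 (fun x y : 'I_s => (x <= y)%N).
Proof. by move=> x y; rewrite /index_le !index_enum_ord. Qed.

Lemma vpoly_letters_char (R : numFieldType) s (b c : 'I_s -> R) I :
  vpoly b c I = letters_char (fun x i => b x * c x ^+ i.-1) (enum 'I_s) I.
Proof.
rewrite /vpoly -sum_sorted_words_weight ?enum_uniq // -sum_sorted_tuples.
apply: eq_big => [t|t _]; first by apply: eq_sorted => x y; rewrite index_le_enum_ord.
rewrite /word_weight sigw_enum mulrAC -big_split /=.
by rewrite (prod_tnth_zip (fun y i => b y * c y ^+ i.-1) t (erefl _)).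
Qed.

Theorem mainTheorem5 (R : realFieldType) (s : nat) (b c : 'I_s -> R) (I J : seq nat) :
  all (fun i => (0 < i)%N) I -> all (fun i => (0 < i)%N) J ->
  vpoly b c I * vpoly b c J
    = \sum_(p : {perm 'I_(size I + size J)} | shuffleb p) vpoly b c (shuffle_word p)
  /\
  wcoef R I * wcoef R J
    = \sum_(p : {perm 'I_(size I + size J)} | shuffleb p) wcoef R (shuffle_word p).
Proof.
move=> I_pos J_pos; rewrite !sum_shuffle_word; split.
  rewrite !vpoly_letters_char shuffle_char_letters.
  by apply: eq_bigr => w _; rewrite vpoly_letters_char.
rewrite sum_shuffle_rev -{1}(revK I) -{1}(revK J) !wcoef_rev.
rewrite suffix_coef_shuffle ?all_rev //.
by apply: eq_bigr => w _; rewrite wcoef_rev.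
Qed.
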